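(* Let $n,k\ge 0$ be integers with expansions $(n)_{\mathbf F}=(n_0,n_1,n_2,\ldots)$ and $(k)_{\mathbf F}=(k_0,k_1,k_2,\ldots)$ in the base $\mathbf F$. Then $$\binom{n}{k}_F\equiv \binom{n_0}{k_0}_F\binom{n_1}{k_1}_F\binom{n_2}{k_2}_F\cdots \pmod 2$$ (the product is effectively finite since all but finitely many factors are $\binom{0}{0}_F=1$).
   Context: The Fibonacci numbers are defined by $F_0=0$, $F_1=1$, $F_n=F_{n-1}+F_{n-2}$ for $n\ge 2$. For $n\ge 0$ let $n!_F=F_1F_2\cdots F_n$ (with $0!_F=1$), and for $0\le k\le n$ define the Fibonomial coefficient $\binom{n}{k}_F=\dfrac{n!_F}{k!_F\,(n-k)!_F}$; by convention $\binom{n}{k}_F=0$ if $k<0$ or $k>n$. The base $\mathbf F$ is the sequence $(b_0,b_1,b_2,\ldots)=(1,3,3\cdot 2,3\cdot 2^2,\ldots)$, i.e. $b_0=1$ and $b_i=3\cdot 2^{i-1}$ for $i\ge 1$. Every integer $n\ge 0$ has a unique expansion $n=\sum_{i\ge 0} n_i b_i$ with $0\le n_i<b_{i+1}/b_i$ for all $i$ (so $0\le n_0\le 2$ and $n_i\in\{0,1\}$ for $i\ge 1$, with only finitely many nonzero digits); this digit sequence is denoted $(n)_{\mathbf F}=(n_0,n_1,n_2,\ldots)$. *)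

From mathcomp Require Import all_boot.
Set Implicit Arguments. Unset Strict Implicit. Unset Printing Implicit Defensive.

Fixpoint fib (n : nat) : nat :=
  match n with
  | 0 => 0
  | 1 => 1
  | (m.+1 as p).+1 => fib p + fib m
  end.

Definition fibfact (n : nat) : nat := \prod_(1 <= i < n.+1) fib i.

(* Fibonomial coefficient; 0 when k > n.  The quotient is exact (a known
   fact), so nat division computes the paper's quotient. *)
Definition fibonomial (n k : nat) : nat :=
  if k <= n then fibfact n %/ (fibfact k * fibfact (n - k)) else 0.

Definition baseF (i : nat) : nat := if i is j.+1 then 3 * 2 ^ j else 1.

Definition is_F_expansion (N n : nat) (d : nat -> nat) : Prop :=
  [/\ forall i, d i < baseF i.+1 %/ baseF i,
      forall i, N <= i -> d i = 0
    & n = \sum_(i < N) d i * baseF i].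

Example fib_test : [seq fib i | i <- iota 0 8] = [:: 0;1;1;2;3;5;8;13]. Proof. by vm_compute. Qed.
Example fibo_test : fibonomial 5 2 = 15.
Proof. by rewrite /fibonomial /fibfact unlock. Qed.

From mathcomp Require Import all_boot zify ring.

(* Proof outline.
   1. Fibonomials satisfy the Pascal-like recurrence
        C(n+1, k+1)_F = F_k C(n, k+1)_F + F_(n+1-k) C(n, k)_F,
      a consequence of the addition formula F_(a+b+1) = F_a F_b + F_(a+1) F_(b+1). *)

Lemma fibSS n : fib n.+2 = fib n.+1 + fib n.
Proof. by []. Qed.

Lemma fib_add a b : fib (a + b).+1 = fib a * fib b + fib a.+1 * fib b.+1.
Proof.
elim: a b => [|a IH] b; first by rewrite add0n mul0n mul1n.
by rewrite addSn -addnS IH !fibSS; ring.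
Qed.

Lemma fib_gt0 i : 0 < fib i.+1.
Proof.
suff [] : 0 < fib i.+1 /\ 0 < fib i.+2 by [].
elim: i => [|i [IH0 IH1]] //; split=> //; by rewrite fibSS ltn_addr.
Qed.

Lemma fibfact0 : fibfact 0 = 1.
Proof. by rewrite /fibfact big_geq. Qed.

Lemma fibfactS n : fibfact n.+1 = fibfact n * fib n.+1.
Proof. by rewrite /fibfact big_nat_recr. Qed.

Lemma fibfact_gt0 n : 0 < fibfact n.
Proof.
by elim: n => [|n IH]; rewrite ?fibfact0 // fibfactS muln_gt0 IH fib_gt0.
Qed.

Fixpoint fibpascal (n k : nat) : nat :=
  match n, k with
  | _, 0 => 1
  | 0, _.+1 => 0
  | n'.+1, k'.+1 => fib k' * fibpascal n' k'.+1 + fib (n'.+1 - k') * fibpascal n' k'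
  end.

Lemma fibpascalSS n k :
  fibpascal n.+1 k.+1 = fib k * fibpascal n k.+1 + fib (n.+1 - k) * fibpascal n k.
Proof. by []. Qed.

Lemma fibpascaln0 n : fibpascal n 0 = 1.
Proof. by case: n. Qed.

Lemma fibpascal_small n k : n < k -> fibpascal n k = 0.
Proof. by elim: n k => [|n IH] [|k] //= lt_nk; rewrite !IH ?muln0 // ltnW. Qed.

Lemma fibpascal_diag n : fibpascal n n = 1.
Proof. by elim: n => //= n IH; rewrite fibpascal_small // muln0 add0n subSnn IH. Qed.

(* The recurrence computes n!_F / (k!_F (n-k)!_F), stated with n = a + b.
   The inductive step is the addition formula F_(a+b+2) = F_a F_(b+1) +
   F_(a+1) F_(b+2) multiplied by (a+b+1)!_F. *)
Lemma fibpascal_fact a b :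
  fibpascal (a + b) a * (fibfact a * fibfact b) = fibfact (a + b).
Proof.
elim: a b => [|a IHa] b; first by rewrite add0n fibpascaln0 fibfact0 !mul1n.
elim: b => [|b IHb]; first by rewrite addn0 fibpascal_diag fibfact0 mul1n muln1.
have IHa' := IHa b.+1; rewrite -addSnnS in IHa'.
rewrite -addSnnS fibpascalSS.
have fib_sum : fib (a.+1 + b).+1 = fib a * fib b.+1 + fib a.+1 * fib b.+2.
  by rewrite addSnnS fib_add.
have -> : (a.+1 + b).+1 - a = b.+2 by lia.
rewrite (fibfactS (a.+1 + b)) fib_sum mulnDr -{1}IHb -IHa' !fibfactS; ring.
Qed.

Lemma fibonomial_fibpascal n k : fibonomial n k = fibpascal n k.
Proof.
rewrite /fibonomial; case: leqP => [le_kn|lt_nk]; last by rewrite fibpascal_small.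
have := fibpascal_fact k (n - k); rewrite subnKC // => <-.
by rewrite mulnK // muln_gt0 !fibfact_gt0.
Qed.

Lemma modnS1 n p : n.+1 %% p = (n %% p).+1 %% p.
Proof. by rewrite -addn1 -modnDml addn1. Qed.

Lemma divnS1 n p : 0 < p -> n.+1 %/ p = n %/ p + (n %% p).+1 %/ p.
Proof. by move=> p_gt0; rewrite {1}(divn_eq n p) -addnS divnMDl. Qed.

Lemma lucas_lt p x y : 0 < p -> x < y ->
  (y %% p <= x %% p) && odd 'C(x %/ p, y %/ p) = false.
Proof.
move=> p_gt0 lt_xy; have [lt_q|ge_q] := ltnP (x %/ p) (y %/ p).
  by rewrite bin_small ?andbF.
have eq_q : y %/ p = x %/ p.
  by apply/eqP; rewrite eqn_leq ge_q leq_div2r // ltnW.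
have : x %% p < y %% p.
  by move: lt_xy; rewrite {1}(divn_eq x p) {1}(divn_eq y p) eq_q ltn_add2l.
by rewrite ltnNge => /negbTE->.
Qed.

Lemma binomial_odd n k : odd 'C(n, k) = (k %% 2 <= n %% 2) && odd 'C(n %/ 2, k %/ 2).
Proof.
elim: n k => [|n IH] [|k]; first by [].
- by rewrite lucas_lt.
- by rewrite mod0n div0n !bin0.
have [lt_nk|le_kn] := ltnP n k; first by rewrite bin_small ?lucas_lt.
rewrite binS oddD !IH (modnS1 n 2) (modnS1 k 2) (@divnS1 n 2 isT) (@divnS1 k 2 isT).
case: (n %% 2) (ltn_pmod n (isT : 0 < 2)) => [|[|]] // _;
  case: (k %% 2) (ltn_pmod k (isT : 0 < 2)) => [|[|]] // _ /=.
all: rewrite ?addn0 ?addn1 ?andbT ?andbF ?addbF ?addFb ?addbb //.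
by rewrite binS oddD.
Qed.

Lemma fib_odd i : odd (fib i) = (i %% 3 != 0).
Proof.
suff [] : odd (fib i) = (i %% 3 != 0) /\ odd (fib i.+1) = (i.+1 %% 3 != 0) by [].
elim: i => [|i [IH0 IH1]] //; split=> //.
rewrite fibSS oddD IH1 IH0 -[i.+2]addn2 -[i.+1]addn1 -(modnDml i 2) -(modnDml i 1).
by have := ltn_pmod i (isT : 0 < 3); case: (i %% 3) => [|[|[|]]].
Qed.

(* Lucas step at radix 3 for Fibonomials modulo 2: reduce the recurrence
   mod 2 using the parity of F_i, then compare with the binomial recurrence. *)
Lemma fibpascal_odd n k :
  odd (fibpascal n k) = (k %% 3 <= n %% 3) && odd 'C(n %/ 3, k %/ 3).
Proof.
elim: n k => [|n IH] [|k]; first by [].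
- by rewrite lucas_lt.
- by rewrite fibpascaln0 mod0n div0n bin0.
have [lt_nk|le_kn] := ltnP n k; first by rewrite fibpascal_small ?lucas_lt.
rewrite fibpascalSS oddD !oddM !fib_odd !IH (modnS1 n 3) (modnS1 k 3).
have -> : (n.+1 - k) %% 3 = (4 + n %% 3 - k %% 3) %% 3 by lia.
rewrite (@divnS1 n 3 isT) (@divnS1 k 3 isT).
case: (n %% 3) (ltn_pmod n (isT : 0 < 3)) => [|[|[|]]] // _;
  case: (k %% 3) (ltn_pmod k (isT : 0 < 3)) => [|[|[|]]] // _ /=.
all: rewrite ?addn0 ?addn1 ?andbT ?andbF ?addbF ?addFb ?addbb //.
by rewrite binS oddD.
Qed.

Lemma modn_digit p a x : a < p -> (a + p * x) %% p = a.
Proof. by move=> lt_ap; rewrite addnC mulnC modnMDl modn_small. Qed.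

Lemma divn_digit p a x : a < p -> (a + p * x) %/ p = x.
Proof.
move=> lt_ap; rewrite addnC mulnC divnMDl ?divn_small ?addn0 //.
exact: leq_ltn_trans lt_ap.
Qed.

Lemma sum_digits_recl b M (d : nat -> nat) :
  \sum_(i < M.+1) d i * b ^ i = d 0 + b * \sum_(i < M) d i.+1 * b ^ i.
Proof.
rewrite big_ord_recl expn0 muln1 big_distrr; congr (_ + _).
by apply: eq_bigr => i _; rewrite expnS mulnCA.
Qed.

Lemma binomial_odd_binary M (d e : nat -> nat) :
  (forall i, d i < 2) -> (forall i, e i < 2) ->
  odd 'C(\sum_(i < M) d i * 2 ^ i, \sum_(i < M) e i * 2 ^ i)
  = \big[andb/true]_(i < M) (e i <= d i).
Proof.
elim: M d e => [|M IH] d e d_lt e_lt; first by rewrite !big_ord0.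
rewrite !sum_digits_recl binomial_odd big_ord_recl !modn_digit // !divn_digit //.
by rewrite (IH (fun i => d i.+1) (fun i => e i.+1)).
Qed.

Lemma fibonomial_digit_odd a b : a < 3 -> b < 3 -> odd (fibonomial a b) = (b <= a).
Proof.
move=> a_lt b_lt.
by rewrite fibonomial_fibpascal fibpascal_odd !divn_small // bin0 andbT !modn_small.
Qed.

Lemma baseF_ratio i : baseF i.+2 %/ baseF i.+1 = 2.
Proof. by rewrite /= expnS mulnCA mulnK // muln_gt0 expn_gt0. Qed.

Lemma F_digit_bounds (d : nat -> nat) :
  (forall i, d i < baseF i.+1 %/ baseF i) -> d 0 < 3 /\ forall i, d i.+1 < 2.
Proof. by move=> d_lt; split=> [|i]; [exact: d_lt 0 | rewrite -(baseF_ratio i)]. Qed.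

Lemma sum_baseF_recl N (d : nat -> nat) :
  \sum_(i < N.+1) d i * baseF i = d 0 + 3 * \sum_(i < N) d i.+1 * 2 ^ i.
Proof.
rewrite big_ord_recl muln1 big_distrr; congr (_ + _).
by apply: eq_bigr => i _; rewrite mulnCA.
Qed.

Theorem mainTheorem4 (n k N : nat) (nd kd : nat -> nat) :
  is_F_expansion N n nd -> is_F_expansion N k kd ->
  fibonomial n k = \prod_(i < N) fibonomial (nd i) (kd i) %[mod 2].
Proof.
move=> [/F_digit_bounds [nd0_lt nd_lt] _ ->] [/F_digit_bounds [kd0_lt kd_lt] _ ->].
rewrite !modn2 (big_morph odd oddM (erefl (odd 1))).
have nd_lt3 i : nd i < 3 by case: i => [|i] //; exact: ltn_trans (nd_lt i) _.
have kd_lt3 i : kd i < 3 by case: i => [|i] //; exact: ltn_trans (kd_lt i) _.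
rewrite (eq_bigr (fun i : 'I_N => kd i <= nd i)); last first.
  by move=> i _; exact: fibonomial_digit_odd.
rewrite fibonomial_fibpascal; case: N => [|N]; first by rewrite !big_ord0.
rewrite !sum_baseF_recl fibpascal_odd big_ord_recl.
rewrite !modn_digit // !divn_digit //.
by rewrite (@binomial_odd_binary N (fun i => nd i.+1) (fun i => kd i.+1)).
Qed.
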